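(* Consider the $(\mu+1)$ EA with genotypic or phenotypic clearing, niche capacity $\kappa\in\mathbb{N}$, population size $\mu\ge\kappa n^2/4$ and clearing radius $\sigma=n/2$ on $\textsc{Twomax}$, with a population containing $\kappa$ copies of $0^n$ (respectively $1^n$). Then the expected time (number of generations) until a search point with at least (respectively at most) $n/2$ ones is found is $O(\mu n\log\mu)$.
   Context: $\textsc{Twomax}(x)=\max\{|x|_1,\,n-|x|_1\}$ for $x\in\{0,1\}^n$, where $|x|_1$ is the number of ones; its optima are $0^n$ and $1^n$. The $(\mu+1)$ EA with clearing (population size $\mu$, clearing radius $\sigma$, niche capacity $\kappa$, distance function $\mathrm{d}$): $P_0$ consists of $\mu$ bit strings chosen independently and uniformly at random. In generation $t$: choose a parent $x\in P_t$ uniformly at random; create $y$ by flipping each bit of $x$ independently with probability $1/n$; let $P_t^*=P_t\cup\{y\}$; update the fitness values of $P_t^*$ by the clearing procedure: sort $P_t^*$ by decreasing fitness; for $i=1,\dots,|P_t^*|$, if the current fitness of $P[i]$ is positive, set $w:=1$ and for $j=i+1,\dots,|P_t^*|$: if the current fitness of $P[j]$ is positive and $\mathrm{d}(P[i],P[j])<\sigma$ then, if $w<\kappa$ set $w:=w+1$, else set the fitness of $P[j]$ to $0$. Individuals whose fitness is not reset are winners, the others are cleared. Then choose $z\in P_t$ with worst (cleared) fitness uniformly at random; if the (cleared) fitness of $y$ is at least that of $z$, set $P_{t+1}=P_t^*\setminus\{z\}$, otherwise $P_{t+1}=P_t^*\setminus\{y\}$. Genotypic clearing uses the Hamming distance $\mathrm{d}(x,y)=H(x,y)$;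 phenotypic clearing uses $\mathrm{d}(x,y)=\big||x|_1-|y|_1\big|$. *)

From HB Require Import structures.
From mathcomp Require Import all_boot all_order all_algebra.
From mathcomp Require Import all_classical all_reals exp.
Set Implicit Arguments. Unset Strict Implicit. Unset Printing Implicit Defensive.
Import Order.TTheory GRing.Theory Num.Theory.

Definition bits (n : nat) := n.-tuple bool.

Definition ones n (x : bits n) : nat := count id x.

Definition twomax n (x : bits n) : nat := maxn (ones x) (n - ones x).

Definition zeros_str n : bits n := [tuple of nseq n false].
Definition ones_str n : bits n := [tuple of nseq n true].

Definition hamming n (x y : bits n) : nat := \sum_(i < n) (tnth x i != tnth y i).

Definition phendist n (x y : bits n) : nat :=
  (ones x - ones y) + (ones y - ones x).

(* geno = true : genotypic clearing; geno = false : phenotypic clearing *)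
Definition dist (geno : bool) n : bits n -> bits n -> nat :=
  if geno then @hamming n else @phendist n.

(* The (multi)set P_t^* is represented as a list L of search points; the
   individuals are identified by their positions 0..size L - 1.  A fitness
   assignment is a function from positions to nat.  The clearing radius is
   sigma = n/2, so "d < sigma" is "2 * d < n". *)
Section Clearing.
Variables (geno : bool) (n kappa : nat) (L : seq (bits n)).

Definition ind (k : nat) : bits n := nth (zeros_str n) L k.

Definition reset (f : nat -> nat) (j : nat) : nat -> nat :=
  fun k => if k == j then 0 else f k.

Fixpoint clear_inner (i : nat) (rest : seq nat) (w : nat) (f : nat -> nat)
  : nat -> nat :=
  match rest with
  | [::] => f
  | j :: rest' =>
      if (0 < f j) && (2 * dist geno (ind i) (ind j) < n) then
        if w < kappa then clear_inner i rest' w.+1 f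
        else clear_inner i rest' w (reset f j)
      else clear_inner i rest' w f
  end.

Fixpoint clear_outer (order : seq nat) (f : nat -> nat) : nat -> nat :=
  match order with
  | [::] => f
  | i :: rest =>
      clear_outer rest (if 0 < f i then clear_inner i rest 1 f else f)
  end.

End Clearing.

(* The paper does not fix
   how ties are broken; the theorem is quantified over all such rules. *)
Definition valid_sort n (tb : seq (bits n) -> seq nat) : Prop :=
  forall L : seq (bits n),
    perm_eq (tb L) (iota 0 (size L)) /\
    sorted (fun i j => twomax (ind L j) <= twomax (ind L i)) (tb L).

Definition cleared_fit geno n kappa (tb : seq (bits n) -> seq nat)
  (L : seq (bits n)) : nat -> nat :=
  clear_outer geno kappa L (tb L) (fun k => twomax (ind L k)).

Definition pop mu n := mu.-tuple (bits n).

Section Step.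
Variables (R : realType) (geno : bool) (n kappa mu : nat)
          (tb : seq (bits n) -> seq nat).
Local Open Scope ring_scope.

Definition mutp (x y : bits n) : R :=
  \prod_(k < n) (if tnth x k == tnth y k then 1 - n%:R^-1 else n%:R^-1).

(* fitness of P_t^* = P ++ [y]; y has position mu *)
Definition fitstar (P : pop mu n) (y : bits n) : nat -> nat :=
  cleared_fit geno kappa tb (rcons P y).

Definition worst (P : pop mu n) (y : bits n) : seq 'I_mu :=
  seq.filter (fun k : 'I_mu =>
     [forall k' : 'I_mu, (fitstar P y k <= fitstar P y k')%N]) (enum 'I_mu).

Definition next_pop (P : pop mu n) (y : bits n) (z : 'I_mu) : pop mu n :=
  if (fitstar P y z <= fitstar P y mu)%N
  then [tuple (if i == z then y else tnth P i) | i < mu]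
  else P.

(* probability that one generation starting from P creates an offspring y
   with ~~ tgt y and yields the population P' *)
Definition trans (tgt : pred (bits n)) (P P' : pop mu n) : R :=
  \sum_(i < mu) mu%:R^-1 *
   \sum_(y : bits n | ~~ tgt y) mutp (tnth P i) y *
     \sum_(z <- worst P y) (size (worst P y))%:R^-1 *
        ((next_pop P y z == P')%:R).

(* killed distribution: surv tgt P0 t P = Pr[T > t and P_t = P], where T is
   the first generation in which a search point satisfying tgt is found
   (T = 0 if P0 already contains one). *)
Fixpoint surv (tgt : pred (bits n)) (P0 : pop mu n) (t : nat) (P : pop mu n)
  : R :=
  match t with
  | 0 => ((P == P0) && ~~ has tgt P0)%:R
  | t'.+1 => \sum_(Q : pop mu n) surv tgt P0 t' Q * trans tgt Q P
  end.

Definition tail_prob (tgt : pred (bits n)) (P0 : pop mu n) (t : nat) : R :=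
  \sum_(P : pop mu n) surv tgt P0 t P.

(* E[T] <= B, stated as: every partial sum of E[T] = sum_t Pr[T > t] is <= B *)
Definition expected_time_le (tgt : pred (bits n)) (P0 : pop mu n) (B : R)
  : Prop :=
  forall N : nat, \sum_(t < N) tail_prob tgt P0 t <= B.

End Step.

Definition atleast_half n : pred (bits n) := fun x => n <= 2 * ones x.
Definition atmost_half n : pred (bits n) := fun x => 2 * ones x <= n.

From HB Require Import structures.
From mathcomp Require Import all_boot all_order all_algebra.
From mathcomp Require Import all_classical all_reals sequences exp.
From mathcomp Require Import zify ring lra.
Import Order.TTheory GRing.Theory Num.Theory.
Local Open Scope ring_scope.
Set Implicit Arguments. Unset Strict Implicit. Unset Printing Implicit Defensive.

Lemma count_tnth (T : Type) (m : nat) (a : pred T) (t : m.-tuple T) :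
  count a t = (\sum_(i < m) a (tnth t i))%N.
Proof.
rewrite -sum1_count big_tuple big_mkcond /=.
by apply: eq_bigr => i _; case: (a _).
Qed.

Lemma sum_tuple_prod (R : comPzSemiRingType) (n : nat) (F : 'I_n -> bool -> R) :
  \sum_(y : n.-tuple bool) \prod_(k < n) F k (tnth y k) =
  \prod_(k < n) (F k true + F k false).
Proof.
under [RHS]eq_bigr => k _ do rewrite -big_bool.
rewrite bigA_distr_bigA /=.
rewrite (reindex (fun f : {ffun 'I_n -> bool} => [tuple f i | i < n])) /=.
  by apply: eq_bigr => f _; apply: eq_bigr => k _; rewrite tnth_mktuple.
apply: onW_bij; exists (fun y : n.-tuple bool => [ffun i => tnth y i]).
  by move=> f; apply/ffunP => i; rewrite ffunE tnth_mktuple.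
by move=> y; apply: eq_from_tnth => i; rewrite tnth_mktuple ffunE.
Qed.

Lemma count_mem_subset_uniq (T : eqType) (A s : seq T) :
  uniq A -> uniq s -> {subset A <= s} -> count (mem A) s = size A.
Proof.
move=> uA us sAs; rewrite -size_filter; apply/perm_size/uniq_perm => //.
  exact: filter_uniq.
by move=> x; rewrite mem_filter; apply/andP/idP => [[]//|Ax]; split=> //; apply: sAs.
Qed.

Lemma sum_ord_mem (m : nat) (A : seq nat) :
  (\sum_(i < m) (val i \in A))%N = count (mem A) (iota 0 m).
Proof.
rewrite -sum1_count big_mkcond /= -(big_mkord xpredT (fun i => nat_of_bool (i \in A))).
by rewrite /index_iota subn0 [RHS]big_mkcond; apply: eq_bigr => i _; case: (i \in A).
Qed.

Lemma all_take_pairwise (T : eqType) (r : rel T) (P : pred T) (s : seq T) (m : nat) :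
  {in s &, forall a c, r a c -> ~~ P a -> ~~ P c} ->
  pairwise r s -> (m <= count P s)%N -> all P (take m s).
Proof.
elim: s m => [|x s IH] [|m] //= rP /andP[rx rs] hm.
have rPs : {in s &, forall a c, r a c -> ~~ P a -> ~~ P c}.
  by move=> a c sa sc; apply: rP; rewrite inE ?sa ?sc orbT.
case Px: (P x) hm => /= hm; first exact: IH.
suff s0 : count P s = 0%N by rewrite s0 in hm.
apply/eqP; rewrite -leqn0 leqNgt -has_count; apply/hasPn => c sc.
by apply: (rP x c); rewrite ?mem_head ?inE ?sc ?orbT ?Px // (allP rx).
Qed.

Lemma bernoulli_ineq (R : realDomainType) (p : R) (m : nat) :
  0 <= p <= 1 -> 1 - m%:R * p <= (1 - p) ^+ m.
Proof.
move=> /andP[p0 p1]; have q0 : 0 <= 1 - p by lra.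
elim: m => [|m IH]; first by rewrite mul0r subr0 expr0.
rewrite exprS -natr1; have m0 : 0 <= (m%:R : R) := ler0n _ _.
have [h|h] := lerP 0 (1 - m%:R * p).
  apply: le_trans (ler_wpM2l q0 IH); nra.
apply: le_trans (mulr_ge0 q0 (exprn_ge0 m q0)); nra.
Qed.

Lemma geometric_sum_le (R : realFieldType) (r : R) (K : nat) :
  0 <= r < 1 -> \sum_(j < K) r ^+ j <= (1 - r)^-1.
Proof.
move=> /andP[r0 r1]; have r1' : 0 < 1 - r by lra.
have -> : \sum_(j < K) r ^+ j = (1 - r ^+ K) / (1 - r).
  have e : 1 - r ^+ K = (1 - r) * \sum_(j < K) r ^+ j.
    by rewrite -opprB subrX1 -mulNr opprB.
  by rewrite e; field; rewrite gt_eqF.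
rewrite ler_pdivrMr // mulVf ?gt_eqF // lerBlDr lerDl exprn_ge0 //.
Qed.

Lemma sum_tail_le (R : realFieldType) (S : nat -> R) (t0 : nat) (M r : R) :
  0 <= r < 1 -> (forall t, S t <= 1) -> (forall t, S t <= M * r ^+ t) ->
  M * r ^+ t0 <= 1 -> forall N, \sum_(t < N) S t <= t0%:R + (1 - r)^-1.
Proof.
move=> /[dup] r01 /andP[r0 r1] S1 SM Mt0 N.
have geom0 : 0 <= (1 - r)^-1 by rewrite invr_ge0; lra.
have sum_le_card k : \sum_(t < k) S t <= k%:R.
  by rewrite -[k in k%:R]card_ord -sumr_const ler_sum.
have [Nt0|t0N] := leqP N t0.
  by apply: le_trans (sum_le_card N) _; rewrite -[_%:R]addr0 lerD // ler_nat.
rewrite -(big_mkord xpredT) (big_cat_nat (leq0n t0) (ltnW t0N)) /=.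
rewrite big_mkord lerD ?sum_le_card //.
rewrite -{1}(add0n t0) big_addn big_mkord.
apply: le_trans (geometric_sum_le _ r01); apply: ler_sum => j _.
apply: le_trans (SM _) _; rewrite addnC exprD mulrA.
by rewrite -[leRHS]mul1r ler_wpM2r // exprn_ge0.
Qed.

Lemma ln_ge_half (R : realType) (m : R) : 2 <= m -> 1 / 2 <= ln m.
Proof.
move=> m2; have m0 : 0 < m by lra.
have mi0 : 0 < m^-1 by rewrite invr_gt0.
have mi2 : m^-1 <= 2^-1 by rewrite lef_pV2 ?posrE //; lra.
have := @le_ln1Dx R (m^-1 - 1); rewrite [1 + _]addrC subrK lnV ?posrE //.
move=> h; have := h ltac:(lra); lra.
Qed.

Lemma sum_tail_mult_drift (R : realType) (S : nat -> R) (M d : R) :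
  1 <= M -> 0 < d <= 1 -> (forall t, S t <= 1) ->
  (forall t, S t <= M * (1 - d) ^+ t) ->
  forall N, \sum_(t < N) S t <= (ln M + 1) / d + 1.
Proof.
move=> M1 /andP[d0 d1] S1 SM N.
have lnM0 : 0 <= ln M by apply: ln_ge0.
set t0 := (Num.Def.truncn (ln M / d)).+1.
have t0_gt : ln M / d < t0%:R by apply: truncnS_gt.
have t0_le : t0%:R <= ln M / d + 1.
  rewrite -natr1 lerD2r; case/andP: (truncn_itv (divr_ge0 lnM0 (ltW d0))) => //.
have Mt0 : M * (1 - d) ^+ t0 <= 1.
  have M0 : 0 < M by lra.
  have h1 : (1 - d) ^+ t0 <= expR (t0%:R * - d).
    rewrite expRM_natl; apply: lerXn2r; rewrite ?nnegrE ?subr_ge0 ?expR_ge0 //.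
    by have := expR_ge1Dx (- d); rewrite addrC.
  have h2 : expR (t0%:R * - d) <= M^-1.
    rewrite -[M^-1]lnK ?posrE ?invr_gt0 // lnV ?posrE // ler_expR mulrN lerN2.
    by rewrite -ler_pdivrMr // ltW.
  apply: le_trans (ler_wpM2l (ltW M0) (le_trans h1 h2)) _.
  by rewrite mulfV ?gt_eqF.
apply: le_trans (sum_tail_le _ S1 SM Mt0 N) _; first lra.
have -> : 1 - (1 - d) = d by ring.
by rewrite mulrDl mul1r; lra.
Qed.

Section BitStrings.
Variable n : nat.

Definition anchor (b : bool) : bits n := [tuple of nseq n b].

Definition adist (b : bool) (x : bits n) : nat := count (fun c => c != b) x.

Definition basin (b : bool) (x : bits n) : bool := (2 * adist b x < n)%N.

Lemma adist_le b (x : bits n) : (adist b x <= n)%N.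
Proof. by rewrite /adist (leq_trans (count_size _ _)) // size_tuple. Qed.

Lemma adist_false (x : bits n) : adist false x = ones x.
Proof. by apply: eq_count => -[]. Qed.

Lemma adist_true (x : bits n) : adist true x = (n - ones x)%N.
Proof.
have := count_predC id x; rewrite size_tuple /adist /ones.
rewrite (@eq_count _ (fun c => c != true) (predC id)); last by case.
by move/(congr1 (subn^~ (count id x))); rewrite addKn.
Qed.

Lemma twomaxE b (x : bits n) : twomax x = maxn (adist b x) (n - adist b x).
Proof.
have := adist_le false x; rewrite /twomax adist_false.
by case: b; rewrite ?adist_true ?adist_false // => le_on; rewrite subKn // maxnC.
Qed.

Lemma twomax_basin b (x : bits n) : basin b x -> twomax x = (n - adist b x)%N.
Proof. by rewrite /basin (twomaxE b) => ?; apply/maxn_idPr; lia. Qed.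

Lemma adist_eq0 b (x : bits n) : (adist b x == 0)%N = (x == anchor b).
Proof.
rewrite /adist -leqn0 leqNgt -has_count.
rewrite (@eq_has _ _ (predC (pred1 b))) // has_predC negbK.
apply/all_pred1P/eqP => [x_b|->]; last by rewrite /= size_nseq.
by apply: val_inj; rewrite /= x_b size_tuple.
Qed.

Lemma adist_anchor b : adist b (anchor b) = 0%N.
Proof. by apply/eqP; rewrite adist_eq0. Qed.

Lemma basin_anchor b : (0 < n)%N -> basin b (anchor b).
Proof. by rewrite /basin adist_anchor. Qed.

Lemma dist_anchor geno b (x : bits n) : dist geno (anchor b) x = adist b x.
Proof.
case: geno => /=.
  rewrite /hamming /adist count_tnth; apply: eq_bigr => i _.
  by rewrite tnth_nseq eq_sym.
have := adist_le false x; rewrite /phendist adist_false.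
have -> : ones (anchor b) = if b then n else 0%N.
  by rewrite /ones count_nseq; case: b; rewrite ?mul1n ?mul0n.
by case: b; rewrite ?adist_true ?adist_false; lia.
Qed.

Lemma atleast_halfE (x : bits n) : atleast_half x = ~~ basin false x.
Proof. by rewrite /atleast_half /basin adist_false -leqNgt. Qed.

Lemma atmost_halfE (x : bits n) : atmost_half x = ~~ basin true x.
Proof.
rewrite /atmost_half /basin adist_true -leqNgt.
by have := adist_le false x; rewrite adist_false; lia.
Qed.

Definition flip (k : 'I_n) (x : bits n) : bits n :=
  [tuple (if j == k then ~~ tnth x j else tnth x j) | j < n].

Lemma adist_flip b k (x : bits n) :
  tnth x k = b -> adist b (flip k x) = (adist b x).+1.
Proof.
move=> xk; rewrite /adist !count_tnth (bigD1 k) //= [in RHS](bigD1 k) //=.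
rewrite tnth_mktuple eqxx xk eqxx add0n (_ : (~~ b != b) = true) ?add1n; last by case: (b).
congr _.+1.
by apply: eq_bigr => j /negbTE jk; rewrite tnth_mktuple jk.
Qed.

Lemma has_anchor_bit b (x : bits n) : (adist b x < n)%N -> exists k, tnth x k = b.
Proof.
move=> lt_n; suff /hasP[c /tnthP[k ->] /eqP] : has (pred1 b) x by exists k.
rewrite has_count; have := count_predC (fun c => c != b) x.
rewrite size_tuple -/(adist b x) (eq_count (a2 := pred1 b)); first lia.
by move=> c /=; rewrite negbK eq_sym.
Qed.

End BitStrings.

Section Margin.
Variables (R : realDomainType) (n : nat) (b : bool).

Definition margin (x : bits n) : R := n%:R - 2 * (adist b x)%:R.

Lemma margin_le (x : bits n) : margin x <= n%:R.
Proof. by rewrite /margin gerBl mulr_ge0. Qed.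

Lemma margin_ge (x : bits n) : - n%:R <= margin x.
Proof. by have := adist_le b x; rewrite -(ler_nat R) /margin; lra. Qed.

Lemma margin_basin (x : bits n) : basin b x -> margin x = (n - 2 * adist b x)%:R.
Proof. by rewrite /basin => ?; rewrite natrB 1?ltnW // natrM. Qed.

Lemma margin_ge1 (x : bits n) : basin b x -> 1 <= margin x.
Proof. by move=> xb; rewrite margin_basin // ler1n subn_gt0. Qed.

Lemma margin_gt2 (x : bits n) : basin b x -> 2 < margin x -> 3 <= margin x.
Proof. by move=> xb; rewrite margin_basin // ltr_nat (ler_nat R 3). Qed.

End Margin.

Section Mutation.
Variables (R : realType) (n : nat).
Let p : R := n%:R^-1.

Lemma mutrate01 : 0 <= p <= 1.
Proof. by rewrite /p invr_ge0 ler0n; case: n => [|m]; rewrite ?invr0 ?ler01 // invf_le1 ?ler1n. Qed.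

Lemma mutp_ge0 (x y : bits n) : 0 <= mutp R x y.
Proof.
have /andP[p0 p1] := mutrate01.
by apply: prodr_ge0 => k _; case: ifP; rewrite ?subr_ge0.
Qed.

Lemma sum_mutp (x : bits n) : \sum_y mutp R x y = 1.
Proof.
rewrite /mutp (sum_tuple_prod (fun k c => if tnth x k == c then 1 - p else p)).
by rewrite big1 // => k _; case: (tnth x k) => /=; lra.
Qed.

Lemma sum_mutp_adist b (x : bits n) :
  \sum_y mutp R x y * (adist b y)%:R = (adist b x)%:R * (1 - 2 * p) + n%:R * p.
Proof.
have adistE (z : bits n) : (adist b z)%:R = \sum_(k < n) ((tnth z k != b)%:R : R).
  by rewrite /adist count_tnth natr_sum.
under eq_bigr => y _ do rewrite adistE mulr_sumr.
have -> : n%:R * p = \sum_(k < n) p by rewrite sumr_const card_ord mulr_natl.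
rewrite exchange_big /= adistE mulr_suml -big_split /=; apply: eq_bigr => k _.
pose G j c := (if tnth x j == c then 1 - p else p) *
              (if j == k then ((c != b)%:R : R) else 1).
transitivity (\sum_(y : n.-tuple bool) \prod_(j < n) G j (tnth y j)).
  by apply: eq_bigr => y _; rewrite /G big_split /= -big_mkcond big_pred1_eq.
rewrite sum_tuple_prod (bigD1 k) //= big1 ?mulr1 => [|j /negbTE jk].
  by rewrite /G eqxx; case: (b); case: (tnth x k) => /=; lra.
by rewrite /G jk; case: (tnth x j) => /=; lra.
Qed.

Lemma sum_mutp_margin b (x : bits n) :
  \sum_y mutp R x y * margin R b y = (1 - 2 * p) * margin R b x.
Proof.
under eq_bigr => y _ do rewrite /margin mulrBr mulrCA.
rewrite sumrB -mulr_suml -mulr_sumr sum_mutp_adist sum_mutp mul1r.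
by rewrite /margin; ring.
Qed.

Lemma mutp_flip k (x : bits n) : mutp R x (flip k x) = p * (1 - p) ^+ n.-1.
Proof.
rewrite /mutp (bigD1 k) //= tnth_mktuple eqxx.
rewrite (_ : (tnth x k == ~~ tnth x k) = false); last by case: (tnth x k).
congr (_ * _); rewrite (eq_bigr (fun _ => 1 - p)) => [|j /negbTE jk].
  by rewrite prodr_const cardC1 card_ord.
by rewrite tnth_mktuple jk eqxx.
Qed.

Hypothesis n_gt0 : (0 < n)%N.

Lemma mutp_flip_ge k (x : bits n) : (n%:R * n%:R)^-1 <= mutp R x (flip k x).
Proof.
have /andP[p0 p1] := mutrate01.
rewrite mutp_flip invfM -/p ler_wpM2l //.
apply: le_trans (bernoulli_ineq _ mutrate01).
have np1 : n%:R * p = 1 by rewrite /p mulfV // pnatr_eq0 -lt0n.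
have -> : n.-1%:R = n%:R - 1 :> R by rewrite -[in RHS](prednK n_gt0) mulrSr addrK.
by rewrite mulrBl np1 mul1r; lra.
Qed.

End Mutation.

Section ClearingLoops.
Variables (geno : bool) (n kappa : nat) (L : seq (bits n)).

Let close (i j : nat) := (2 * dist geno (ind L i) (ind L j) < n)%N.

Lemma clear_inner_id i rest w f :
  (count (fun j => 0 < f j)%N rest + w <= kappa)%N ->
  clear_inner geno kappa L i rest w f = f.
Proof.
elim: rest w => [|j rest IH] w //=.
case: (0 < f j)%N => /= cnt_le; last exact: IH.
by case: ifP => _; rewrite ?ifT ?IH //; lia.
Qed.

Lemma clear_inner_all i rest w f :
  uniq rest -> {in rest, forall j, (0 < f j)%N && close i j} -> (0 < w <= kappa)%N ->
  clear_inner geno kappa L i rest w f =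
  (fun k => if k \in drop (kappa - w) rest then 0%N else f k).
Proof.
elim: rest w f => [|j rest IH] w f /=; first by move=> *; apply: funext => k; case: (_ - _)%N.
move=> /andP[j_rest u_rest] near_rest w_le; rewrite near_rest ?mem_head //.
have near_rest' g : {in rest, g =1 f} -> {in rest, forall j, (0 < g j)%N && close i j}.
  by move=> gf j' j'_rest; rewrite gf // near_rest // inE j'_rest orbT.
case: ltnP => [w_lt|w_ge].
  have -> : (kappa - w = (kappa - w.+1).+1)%N by lia.
  by rewrite (IH w.+1 f u_rest) //; exact: (near_rest' f (fun _ _ => erefl)).
have -> : w = kappa by lia.
rewrite (IH kappa (reset f j) u_rest) ?subnn ?drop0 //; last by lia.
  by apply: funext => k; rewrite /reset inE; case: (k == j); case: (k \in rest).
apply: (near_rest' (reset f j)) => j' j'_rest; rewrite /reset.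
by case: eqP j_rest => [<-|//]; rewrite j'_rest.
Qed.

Lemma clear_outer_id s f :
  (count (fun j => 0 < f j)%N s < kappa)%N -> clear_outer geno kappa L s f = f.
Proof.
elim: s => [|i s IH] //= cnt_lt.
case: (ltnP 0 (f i)) cnt_lt => /= fi cnt_lt; last by rewrite IH //; lia.
by rewrite clear_inner_id ?IH //; lia.
Qed.

Lemma clear_outer_all i0 rest f :
  (0 < kappa)%N -> uniq (i0 :: rest) -> (0 < f i0)%N ->
  {in rest, forall j, (0 < f j)%N && close i0 j} ->
  clear_outer geno kappa L (i0 :: rest) f =
  (fun k => if k \in drop kappa (i0 :: rest) then 0%N else f k).
Proof.
move=> kappa_gt0 /andP[_ u_rest] f_i0 near_rest /=.
rewrite f_i0 (clear_inner_all u_rest near_rest) ?kappa_gt0 // subn1.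
rewrite clear_outer_id; first by case: kappa kappa_gt0.
rewrite -[X in count _ X](cat_take_drop kappa.-1 rest) count_cat.
rewrite [count _ (drop _ _)](eq_in_count (a2 := pred0)) ?count_pred0 => [|k /= ->] //.
by rewrite addn0 (leq_ltn_trans (count_size _ _)) // size_take; case: ifP; lia.
Qed.

End ClearingLoops.
Section ClearedFitness.
Variables (geno b : bool) (n kappa : nat) (tb : seq (bits n) -> seq nat)
  (L : seq (bits n)).
Hypotheses (tb_sort : valid_sort tb) (kappa_gt0 : (0 < kappa)%N) (n_gt0 : (0 < n)%N)
  (L_anchors : (kappa <= count (pred1 (anchor n b)) L)%N)
  (L_basin : all (basin b) L).

Lemma perm_tb : perm_eq (tb L) (iota 0 (size L)). Proof. by case: (tb_sort L). Qed.

Lemma uniq_tb : uniq (tb L). Proof. by rewrite (perm_uniq perm_tb) iota_uniq. Qed.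

Lemma mem_tb k : (k \in tb L) = (k < size L)%N.
Proof. by rewrite (perm_mem perm_tb) mem_iota. Qed.

Lemma size_tb : size (tb L) = size L.
Proof. by rewrite (perm_size perm_tb) size_iota. Qed.

Lemma basin_ind k : (k < size L)%N -> basin b (ind L k).
Proof. by move=> k_lt; apply: (allP L_basin); apply: mem_nth. Qed.

Lemma anchor_take_tb k : k \in take kappa (tb L) -> ind L k = anchor n b.
Proof.
move=> k_take; apply/eqP; move: k k_take; apply/allP.
apply: (@all_take_pairwise _ (fun i j => twomax (ind L j) <= twomax (ind L i))%N).
- move=> i j; rewrite !mem_tb => i_lt j_lt /=; rewrite -!adist_eq0.
  rewrite (twomax_basin (basin_ind i_lt)) (twomax_basin (basin_ind j_lt)).
  by have := basin_ind i_lt; rewrite /basin; lia.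
- rewrite -sorted_pairwise; first by case: (tb_sort L).
  by move=> y x z /= xy yz; apply: leq_trans yz xy.
apply: leq_trans L_anchors _; rewrite (permP perm_tb) -{1}[L](mkseq_nth (zeros_str n)).
by rewrite /mkseq count_map.
Qed.

Lemma cleared_fitE :
  cleared_fit geno kappa tb L =
  (fun k => if k \in drop kappa (tb L) then 0%N else twomax (ind L k)).
Proof.
have size_ge : (kappa <= size (tb L))%N.
  by rewrite size_tb (leq_trans L_anchors) // count_size.
have := uniq_tb; have := anchor_take_tb; have := mem_tb; rewrite /cleared_fit.
case: (tb L) size_ge => [|i0 rest]; first by case: kappa kappa_gt0.
move=> _ tb_mem tb_anchor tb_uniq.
have i0_anchor : ind L i0 = anchor n b.
  by apply: tb_anchor; case: kappa kappa_gt0 => // k _; rewrite /= mem_head.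
apply: clear_outer_all; rewrite // i0_anchor.
  by rewrite (twomax_basin (basin_anchor _ n_gt0)) adist_anchor subn0.
move=> j j_rest; have j_lt : (j < size L)%N by rewrite -tb_mem inE j_rest orbT.
rewrite dist_anchor (twomax_basin (basin_ind j_lt)).
by have := basin_ind j_lt; rewrite /basin; lia.
Qed.

End ClearedFitness.

Definition replace n mu (Q : pop mu n) (z : 'I_mu) (y : bits n) : pop mu n :=
  [tuple (if i == z then y else tnth Q i) | i < mu].

Definition anchored n mu (b : bool) (kappa : nat) (Q : pop mu n) : bool :=
  (kappa <= count (pred1 (anchor n b)) Q)%N && all (basin b) Q.

Definition potential (R : realDomainType) n mu (b : bool) (Q : pop mu n) : R :=
  \sum_(i < mu) margin R b (tnth Q i).

Lemma potential_replace (R : realDomainType) n mu b (Q : pop mu n) z y :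
  potential R b (replace Q z y) = potential R b Q - margin R b (tnth Q z) + margin R b y.
Proof.
rewrite /potential (bigD1 z) //= [in RHS](bigD1 z) //= tnth_mktuple eqxx.
rewrite (eq_bigr (fun i => margin R b (tnth Q i))) => [|i /negbTE iz]; first lra.
by rewrite tnth_mktuple iz.
Qed.

Lemma potential_le (R : realDomainType) n mu b (Q : pop mu n) :
  potential R b Q <= mu%:R * n%:R.
Proof.
rewrite /potential -[mu in mu%:R]card_ord -sumr_const mulr_suml.
by apply: ler_sum => i _; rewrite mul1r margin_le.
Qed.

Lemma potential_ge (R : realDomainType) n mu b kappa (Q : pop mu n) :
  anchored b kappa Q -> mu%:R <= potential R b Q.
Proof.
case/andP=> _ /all_tnthP Q_basin; rewrite /potential -[mu in mu%:R]card_ord -sumr_const.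
by apply: ler_sum => i _; apply: margin_ge1.
Qed.

Section PopulationStep.
Variables (geno b : bool) (n kappa mu : nat) (tb : seq (bits n) -> seq nat).
Variables (Q : pop mu n) (y : bits n).
Hypotheses (tb_sort : valid_sort tb) (kappa_gt0 : (0 < kappa)%N) (n_gt0 : (0 < n)%N)
  (kappa_lt : (kappa < mu)%N) (Q_anchored : anchored b kappa Q) (y_basin : basin b y).

Let L := rcons (tval Q) y.
Let winners := take kappa (tb L).
Let losers := drop kappa (tb L).

Lemma size_rcons_pop : size L = mu.+1.
Proof. by rewrite /L size_rcons size_tuple. Qed.

Lemma rcons_anchors : (kappa <= count (pred1 (anchor n b)) L)%N.
Proof.
case/andP: Q_anchored => Q_anchors _.
by rewrite /L -cats1 count_cat (leq_trans Q_anchors) ?leq_addr.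
Qed.

Lemma rcons_basin : all (basin b) L.
Proof. by case/andP: Q_anchored => _ Q_basin; rewrite /L -cats1 all_cat Q_basin /= y_basin. Qed.

Lemma ind_rcons_ord (i : 'I_mu) : ind L i = tnth Q i.
Proof. by rewrite /L /ind nth_rcons size_tuple ltn_ord (tnth_nth (zeros_str n)). Qed.

Lemma ind_rcons_last : ind L mu = y.
Proof. by rewrite /L /ind nth_rcons size_tuple ltnn eqxx. Qed.

Lemma fitstarE :
  fitstar geno kappa tb Q y = (fun k => if k \in losers then 0%N else twomax (ind L k)).
Proof. exact: (cleared_fitE geno tb_sort kappa_gt0 n_gt0 rcons_anchors rcons_basin). Qed.

Lemma mem_tb_rcons k : (k \in tb L) = (k < mu.+1)%N.
Proof. by rewrite (mem_tb L tb_sort) size_rcons_pop. Qed.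

Lemma size_tb_rcons : size (tb L) = mu.+1.
Proof. by rewrite (size_tb L tb_sort) size_rcons_pop. Qed.

Lemma winners_anchor k : k \in winners -> ind L k = anchor n b.
Proof. exact: (anchor_take_tb tb_sort kappa_gt0 n_gt0 rcons_anchors rcons_basin). Qed.

Lemma winner_notin_losers k : k \in winners -> k \notin losers.
Proof.
have := uniq_tb L tb_sort; rewrite -(cat_take_drop kappa (tb L)) cat_uniq.
by case/and3P=> _ /hasPn disj _ k_win; apply/negP => k_los; move: (disj k k_los); rewrite k_win.
Qed.

Lemma winner_or_loser k : (k < mu.+1)%N -> (k \in winners) || (k \in losers).
Proof. by rewrite -mem_tb_rcons -{1}(cat_take_drop kappa (tb L)) mem_cat. Qed.

Lemma count_winners : count (mem winners) (iota 0 mu.+1) = kappa.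
Proof.
rewrite count_mem_subset_uniq ?iota_uniq ?take_uniq ?(uniq_tb L tb_sort) //.
  by rewrite size_take size_tb_rcons ifT //; lia.
by move=> k /mem_take; rewrite mem_tb_rcons mem_iota.
Qed.

Lemma exists_loser : exists k : 'I_mu, val k \in losers.
Proof.
have : ~~ all (pred1 mu) losers.
  apply/negP => /allP all_mu.
  have := @uniq_leq_size _ losers [:: mu] (drop_uniq _ (uniq_tb L tb_sort)).
  rewrite size_drop size_tb_rcons /= => size_le.
  by have := size_le (fun x x_los => etrans (mem_seq1 x mu) (all_mu x x_los)); lia.
rewrite -has_predC => /hasP [j j_los /= j_mu].
have : (j < mu.+1)%N by rewrite -mem_tb_rcons (mem_drop j_los).
by rewrite ltnS leq_eqVlt (negbTE j_mu) => j_lt; exists (Ordinal j_lt).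
Qed.

Lemma twomax_rcons_gt0 k : (k < mu.+1)%N -> (0 < twomax (ind L k))%N.
Proof.
rewrite -size_rcons_pop => k_lt; have k_basin := basin_ind rcons_basin k_lt.
by rewrite (twomax_basin k_basin); move: k_basin; rewrite /basin; lia.
Qed.

Lemma mem_worst z : (z \in worst geno kappa tb Q y) = (val z \in losers).
Proof.
have [k k_los] := exists_loser.
rewrite mem_filter mem_enum andbT fitstarE; case: ifP => [_|z_win].
  by apply/forallP.
apply/negbTE/forallP => /(_ k); rewrite k_los.
by have := twomax_rcons_gt0 (leqW (ltn_ord z)); lia.
Qed.

Lemma worstE : worst geno kappa tb Q y = [seq z <- enum 'I_mu | val z \in losers].
Proof. by apply: eq_filter => z; have := mem_worst z; rewrite mem_filter mem_enum andbT. Qed.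

Lemma size_worst : (0 < size (worst geno kappa tb Q y) <= mu)%N.
Proof.
have [k k_los] := exists_loser.
have : k \in worst geno kappa tb Q y by rewrite mem_worst.
rewrite /worst mem_filter size_filter -has_count => /andP[Pk k_enum].
by rewrite (leq_trans (count_size _ _)) ?size_enum_ord ?andbT //; apply/hasP; exists k.
Qed.

Lemma next_popE z : z \in worst geno kappa tb Q y -> next_pop geno kappa tb Q y z = replace Q z y.
Proof. by rewrite mem_worst /next_pop fitstarE => ->. Qed.

Lemma anchored_replace z : z \in worst geno kappa tb Q y -> anchored b kappa (replace Q z y).
Proof.
rewrite mem_worst => z_los; case/andP: Q_anchored => _ /all_tnthP Q_basin.
apply/andP; split; last by apply/all_tnthP => i; rewrite tnth_mktuple; case: eqP.
rewrite count_tnth; apply: leq_trans (_ : \sum_(i < mu) ((val i \in winners) + (i == z) * (mu \in winners)) <= _)%N.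
  rewrite big_split /= sum_ord_mem (bigD1 z) //= eqxx mul1n big1 ?addn0 => [|i /negbTE -> //].
  by rewrite -count_winners -addn1 iotaD count_cat /= addn0.
apply: leq_sum => i _; rewrite tnth_mktuple; case: eqVneq => [->|_].
  rewrite (negbTE (contraL (@winner_notin_losers _) _)) ?z_los // mul1n /=.
  by case mu_win: (mu \in winners); rewrite // -ind_rcons_last winners_anchor ?eqxx.
rewrite mul0n addn0; case i_win: (val i \in winners) => //.
by rewrite /= -ind_rcons_ord winners_anchor ?eqxx.
Qed.

Variable R : realFieldType.
Let W := worst geno kappa tb Q y.

Lemma sum_worst_margin_ge :
  potential R b Q - (kappa * n)%:R <= \sum_(z <- W) margin R b (tnth Q z).
Proof.
rewrite /W worstE big_filter big_enum_cond /= /potential.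
rewrite (bigID (fun z : 'I_mu => val z \in losers)) /= lerBlDr lerD2l.
apply: le_trans (_ : \sum_(i < mu) (val i \in winners)%:R * n%:R <= _).
  rewrite [leRHS](bigID (fun z : 'I_mu => val z \in losers)) /= -[leLHS]add0r.
  apply: lerD; first by apply: sumr_ge0 => i _; rewrite mulr_ge0.
  apply: ler_sum => i i_win; have := winner_or_loser (leqW (ltn_ord i)).
  by rewrite (negbTE i_win) orbF => ->; rewrite mul1r margin_le.
rewrite -mulr_suml -natr_sum sum_ord_mem -natrM ler_nat leq_mul2r.
by rewrite -count_winners -addn1 iotaD count_cat leq_addr orbT.
Qed.

Lemma sum_worst_margin_ge0 : 0 <= \sum_(z <- W) margin R b (tnth Q z).
Proof.
case/andP: Q_anchored => _ /all_tnthP Q_basin.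
by apply: sumr_ge0 => z _; apply: le_trans ler01 (margin_ge1 _ (Q_basin z)).
Qed.

Lemma expected_potential_next_pop :
  \sum_(z <- W) (size W)%:R^-1 * potential R b (next_pop geno kappa tb Q y z)
  <= potential R b Q + margin R b y - (potential R b Q - (kappa * n)%:R) / mu%:R.
Proof.
have /andP[W_gt0 W_le] := size_worst; rewrite -/W in W_gt0 W_le.
have sW0 : 0 < (size W)%:R :> R by rewrite ltr0n.
have sW_le : (size W)%:R <= mu%:R :> R by rewrite ler_nat.
rewrite big_seq (eq_bigr (fun z => (size W)%:R^-1 * (potential R b Q + margin R b y - margin R b (tnth Q z)))); last first.
  by move=> z z_W; rewrite next_popE // potential_replace; congr (_ * _); lra.
rewrite -big_seq -mulr_sumr sumrB big_const_seq count_predT iter_addr_0.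
rewrite mulrBr -[(_ + _) *+ _]mulr_natr [_^-1 * (_ * _)]mulrC mulfK ?gt_eqF // lerD2l lerN2.
have := sum_worst_margin_ge; have := sum_worst_margin_ge0; rewrite -/W.
move: (\sum_(z <- W) _) => S S_ge0 S_ge.
apply: le_trans (_ : S / mu%:R <= _); first by rewrite ler_wpM2r ?invr_ge0.
by rewrite [leRHS]mulrC ler_wpM2l // lef_pV2 ?posrE ?(lt_le_trans sW0).
Qed.

End PopulationStep.

Lemma drift_arith (R : realFieldType) (Phi a k N mu n kap : R) :
  0 < n -> 0 < mu -> 0 <= N -> 3 <= k * n -> kap * n * n <= 4 * mu ->
  3 * mu - 2 * N <= Phi -> mu * a = mu * Phi - Phi + kap * n ->
  mu^-1 * (mu * a + (1 - 2 / n) * Phi - k * N) <= (1 - (2 * mu * n)^-1) * Phi.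
Proof.
move=> n0 mu0 N0 kn3 kap_le Phi_ge mu_a.
set ni := n^-1; have ni0 : 0 < ni by rewrite invr_gt0.
have nni : n * ni = 1 by rewrite mulfV ?gt_eqF.
have kap_le' : kap * n <= 4 * mu * ni.
  by rewrite -[kap * n]mulr1 -{1}nni mulrA ler_pM2r.
have k_ge : 3 * ni <= k by rewrite -(ler_pM2r n0) -mulrA mulVf ?gt_eqF // mulr1.
have kN_ge : 3 * ni * N <= k * N by rewrite ler_wpM2r.
have Phi_ge' : (3 * mu - 2 * N) * ni <= Phi * ni by rewrite ler_pM2r.
rewrite -(ler_pM2l mu0) mulrA mulfV ?gt_eqF // mul1r mu_a.
have -> : mu * ((1 - (2 * mu * n)^-1) * Phi) = mu * Phi - Phi * ni / 2.
  by rewrite /ni; field; rewrite !gt_eqF.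
rewrite /ni -/ni; nra.
Qed.

Section Drift.
Variables (R : realType) (geno b : bool) (n kappa mu : nat)
  (tb : seq (bits n) -> seq nat) (tgt : pred (bits n)).

Lemma sum_transE (Q : pop mu n) (h : pop mu n -> R) :
  \sum_P trans R geno kappa tb tgt Q P * h P =
  \sum_(i < mu) mu%:R^-1 * \sum_(y | ~~ tgt y) mutp R (tnth Q i) y *
     \sum_(z <- worst geno kappa tb Q y) (size (worst geno kappa tb Q y))%:R^-1 *
        h (next_pop geno kappa tb Q y z).
Proof.
rewrite /trans; under eq_bigr => P _ do rewrite mulr_suml.
rewrite exchange_big /=; apply: eq_bigr => i _.
under eq_bigr => P _ do rewrite -mulrA mulr_suml.
rewrite -mulr_sumr exchange_big /=; congr (_ * _); apply: eq_bigr => y _.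
under eq_bigr => P _ do rewrite -mulrA mulr_suml.
rewrite -mulr_sumr exchange_big /=; congr (_ * _); apply: eq_bigr => z _.
under eq_bigr => P _ do rewrite -mulrA.
rewrite -mulr_sumr (bigD1 (next_pop geno kappa tb Q y z)) //= eqxx mul1r big1 ?addr0 //.
by move=> P /negbTE P_next; rewrite eq_sym P_next mul0r.
Qed.

Definition hit_prob (x : bits n) : R := \sum_(y | tgt y) mutp R x y.

Hypotheses (n_gt0 : (0 < n)%N) (tgtE : forall x, tgt x = ~~ basin b x).

Lemma hit_prob_ge0 x : 0 <= hit_prob x.
Proof. by apply: sumr_ge0 => y _; apply: mutp_ge0. Qed.

Lemma sum_mutp_survivor (x : bits n) (a : R) : n%:R <= a ->
  \sum_(y | ~~ tgt y) mutp R x y * (a + margin R b y) <=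
  a + (1 - 2 / n%:R) * margin R b x - (a - n%:R) * hit_prob x.
Proof.
move=> a_ge.
have sum_all : \sum_y mutp R x y * (a + margin R b y) = a + (1 - 2 / n%:R) * margin R b x.
  under eq_bigr => y _ do rewrite mulrDr.
  by rewrite big_split /= -mulr_suml sum_mutp // mul1r sum_mutp_margin.
have sum_tgt : (a - n%:R) * hit_prob x <= \sum_(y | tgt y) mutp R x y * (a + margin R b y).
  rewrite /hit_prob mulr_sumr; apply: ler_sum => y _.
  rewrite mulrC; apply: ler_wpM2l; first exact: mutp_ge0.
  by have := margin_ge R b y; lra.
by rewrite -sum_all [X in _ <= X - _](bigID tgt) /=; lra.
Qed.

Lemma hit_prob_ge (x : bits n) : basin b x -> margin R b x <= 2 -> (n%:R * n%:R)^-1 <= hit_prob x.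
Proof.
move=> x_basin; rewrite margin_basin // (ler_nat R _ 2) => small.
have [k xk] : exists k, tnth x k = b by apply: has_anchor_bit; move: x_basin; rewrite /basin; lia.
have tgt_flip : tgt (flip k x) by rewrite tgtE /basin adist_flip // -leqNgt; lia.
apply: le_trans (mutp_flip_ge _ n_gt0 k x) _.
by rewrite /hit_prob (bigD1 (flip k x)) //= lerDl sumr_ge0 // => y _; apply: mutp_ge0.
Qed.

End Drift.

Lemma potential_ge_small (R : realDomainType) n mu b kappa (Q : pop mu n) :
  anchored b kappa Q ->
  3 * mu%:R - 2 * \sum_(i < mu) ((margin R b (tnth Q i) <= 2)%R : nat)%:R <= potential R b Q.
Proof.
case/andP=> _ /all_tnthP Q_basin.
have -> : 3 * mu%:R = \sum_(i < mu) (3 : R) by rewrite sumr_const card_ord mulr_natr.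
rewrite mulr_sumr -sumrB /potential ler_sum // => i _.
have := margin_ge1 R (Q_basin i); have := @margin_gt2 R _ _ _ (Q_basin i).
by case: lerP => /=; lra.
Qed.

Section DriftBound.
Variables (R : realType) (geno b : bool) (n kappa mu : nat)
  (tb : seq (bits n) -> seq nat) (tgt : pred (bits n)).
Hypotheses (tb_sort : valid_sort tb) (kappa_gt0 : (0 < kappa)%N) (n_gt0 : (0 < n)%N)
  (kappa_lt : (kappa < mu)%N) (tgtE : forall x, tgt x = ~~ basin b x)
  (kappa_n2 : (kappa * n ^ 2 <= 4 * mu)%N) (mu_ge : (12 * n <= mu)%N).
Variable Q : pop mu n.
Hypothesis Q_anchored : anchored b kappa Q.

Let Phi := potential R b Q.
Let a := Phi - (Phi - (kappa * n)%:R) / mu%:R.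
Let k := (a - n%:R) / (n%:R * n%:R).
Let small (i : 'I_mu) : R := ((margin R b (tnth Q i) <= 2)%R : nat)%:R.

Lemma mu_gt0 : 0 < mu%:R :> R.
Proof. by rewrite ltr0n; lia. Qed.

Lemma mu_mul_a : mu%:R * a = mu%:R * Phi - Phi + (kappa * n)%:R.
Proof. by rewrite /a; field; rewrite gt_eqF ?mu_gt0. Qed.

Lemma a_sub_n_ge : mu%:R / 4 <= a - n%:R.
Proof.
have Phi_ge : mu%:R <= Phi := potential_ge R Q_anchored.
have mu_ge' : 12 * n%:R <= mu%:R :> R by rewrite -natrM ler_nat.
have n_ge1 : 1 <= n%:R :> R by rewrite ler1n.
rewrite -(ler_pM2l mu_gt0) mulrBr mu_mul_a natrM.
have mu_ge1 : 1 <= mu%:R :> R by rewrite ler1n; lia.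
have : 0 <= (Phi - mu%:R) * (mu%:R - 1) by apply: mulr_ge0; lra.
have : 0 <= mu%:R * (n%:R - 1) :> R by apply: mulr_ge0; lra.
have : 0 <= kappa%:R * n%:R :> R by apply: mulr_ge0.
nra.
Qed.

Lemma parent_step (i : 'I_mu) :
  \sum_(y | ~~ tgt y) mutp R (tnth Q i) y *
     \sum_(z <- worst geno kappa tb Q y) (size (worst geno kappa tb Q y))%:R^-1 *
        potential R b (next_pop geno kappa tb Q y z)
  <= a + (1 - 2 / n%:R) * margin R b (tnth Q i) - k * small i.
Proof.
have a_ge := a_sub_n_ge; have a_n : n%:R <= a by have := mu_gt0; lra.
apply: le_trans (_ : \sum_(y | ~~ tgt y) mutp R (tnth Q i) y * (a + margin R b y) <= _).
  apply: ler_sum => y; rewrite tgtE negbK => y_basin; rewrite ler_wpM2l ?mutp_ge0 //.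
  have := expected_potential_next_pop geno tb_sort kappa_gt0 n_gt0 kappa_lt Q_anchored y_basin R. move=> h.
  by rewrite /a /Phi; lra.
apply: le_trans (sum_mutp_survivor b tgt _ a_n) _; rewrite lerD2l lerN2.
have k0 : 0 <= k by rewrite divr_ge0 ?mulr_ge0 //; lra.
rewrite /small; case: lerP => /= [small_i|_]; last first.
  by rewrite mulr0 mulr_ge0 ?hit_prob_ge0 //; lra.
rewrite mulr1 /k; apply: ler_wpM2l; first lra.
have /andP[_ /all_tnthP Q_basin] := Q_anchored.
by have := hit_prob_ge n_gt0 tgtE (Q_basin i) small_i.
Qed.

Lemma drift :
  \sum_P trans R geno kappa tb tgt Q P * potential R b P
  <= (1 - (2 * mu%:R * n%:R)^-1) * potential R b Q.
Proof.
rewrite sum_transE; apply: le_trans (_ : \sum_(i < mu) mu%:R^-1 *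
  (a + (1 - 2 / n%:R) * margin R b (tnth Q i) - k * small i) <= _).
  by apply: ler_sum => i _; rewrite ler_wpM2l ?invr_ge0 ?ler0n ?parent_step.
rewrite -mulr_sumr sumrB big_split /= sumr_const card_ord -!mulr_sumr -[a *+ mu]mulr_natl.
rewrite (_ : \sum_(i < mu) _ = Phi) //.
apply: (drift_arith (kap := kappa%:R)); rewrite ?ltr0n ?mu_gt0 //.
- by lia.
- by apply: sumr_ge0 => i _; rewrite ler0n.
- have n0 : 0 < n%:R :> R by rewrite ltr0n.
  rewrite /k mulrAC invfM mulrA mulfK ?gt_eqF // ler_pdivlMr //.
  have : 12 * n%:R <= mu%:R :> R by rewrite -natrM ler_nat.
  by have := a_sub_n_ge; lra.
- by rewrite -!natrM ler_nat -mulnA mulnn.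
- exact: (potential_ge_small R Q_anchored).
by rewrite mu_mul_a natrM.
Qed.

End DriftBound.

Section SubMarkovChain.
Variables (R : realType) (geno : bool) (n kappa mu : nat)
  (tb : seq (bits n) -> seq nat) (tgt : pred (bits n)) (P0 : pop mu n).

Local Notation trans := (@trans R geno n kappa mu tb tgt).
Local Notation surv := (surv R geno kappa tb tgt P0).

Lemma trans_ge0 Q P : 0 <= trans Q P.
Proof.
apply: sumr_ge0 => i _; rewrite mulr_ge0 ?invr_ge0 //.
apply: sumr_ge0 => y _; rewrite mulr_ge0 ?mutp_ge0 //.
by apply: sumr_ge0 => z _; rewrite mulr_ge0 ?invr_ge0.
Qed.

Lemma surv_ge0 t P : 0 <= surv t P.
Proof.
elim: t P => [|t IH] P /=; first by rewrite ler0n.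
by apply: sumr_ge0 => Q _; rewrite mulr_ge0 ?trans_ge0.
Qed.

Lemma sum_trans_le1 Q : \sum_P trans Q P <= 1.
Proof.
rewrite (eq_bigr (fun P => trans Q P * 1)) => [|P _]; last by rewrite mulr1.
rewrite sum_transE; apply: le_trans (_ : \sum_(i < mu) mu%:R^-1 * 1 <= 1).
  apply: ler_sum => i _; rewrite ler_wpM2l ?invr_ge0 //.
  apply: le_trans (_ : \sum_y mutp R (tnth Q i) y * 1 <= _); last first.
    by under eq_bigr do rewrite mulr1; rewrite sum_mutp.
  rewrite [leRHS](bigID tgt) /= -[leLHS]add0r lerD ?sumr_ge0 // => [y _|].
    by rewrite mulr_ge0 ?mutp_ge0.
  apply: ler_sum => y _; rewrite ler_wpM2l ?mutp_ge0 //.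
  rewrite big_const_seq count_predT iter_addr_0 mulr1 -[_ *+ _]mulr_natr.
  by case: (eqVneq (size (worst geno kappa tb Q y)) 0) => [-> | W0]; rewrite ?mulr0 // mulVf ?pnatr_eq0.
rewrite sumr_const card_ord mulr1 -[mu%:R^-1 *+ mu]mulr_natr.
by case: (posnP mu) => [-> | mu0]; rewrite ?mulr0 // mulVf ?pnatr_eq0 -?lt0n.
Qed.

Lemma trans_eq0 Q P :
  (forall y z, ~~ tgt y -> z \in worst geno kappa tb Q y -> next_pop geno kappa tb Q y z != P) ->
  trans Q P = 0.
Proof.
move=> not_next; rewrite /trans big1 // => i _; rewrite big1 ?mulr0 // => y y_ntgt.
by rewrite big_seq big1 ?mulr0 // => z z_W; rewrite (negbTE (not_next y z y_ntgt z_W)) mulr0.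
Qed.

Lemma surv_found t P : has tgt P0 -> surv t P = 0.
Proof.
move=> P0_found; elim: t P => [|t IH] P /=; first by rewrite P0_found andbF.
by apply: big1 => Q _; rewrite IH mul0r.
Qed.

Lemma tail_prob_le1 t : tail_prob R geno kappa tb tgt P0 t <= 1.
Proof.
rewrite /tail_prob; elim: t => [|t IH] /=.
  rewrite (bigD1 P0) //= eqxx big1 ?addr0 => [|P /negbTE -> //].
  by case: (has tgt P0).
rewrite exchange_big /=; apply: le_trans IH; apply: ler_sum => Q _.
by rewrite -mulr_sumr -[leRHS]mulr1 ler_wpM2l ?surv_ge0 ?sum_trans_le1.
Qed.

End SubMarkovChain.

Section MultiplicativeDrift.
Variables (R : realType) (geno b : bool) (n kappa mu : nat)
  (tb : seq (bits n) -> seq nat) (tgt : pred (bits n)) (P0 : pop mu n).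
Hypotheses (tb_sort : valid_sort tb) (kappa_gt0 : (0 < kappa)%N) (n_gt0 : (0 < n)%N)
  (kappa_lt : (kappa < mu)%N) (tgtE : forall x, tgt x = ~~ basin b x)
  (kappa_n2 : (kappa * n ^ 2 <= 4 * mu)%N) (mu_ge : (12 * n <= mu)%N)
  (P0_anchored : anchored b kappa P0).

Local Notation trans := (@trans R geno n kappa mu tb tgt).
Local Notation surv := (surv R geno kappa tb tgt P0).

Lemma anchored_trans Q P : anchored b kappa Q -> trans Q P != 0 -> anchored b kappa P.
Proof.
move=> Q_anchored tr_neq0; apply: contraNT tr_neq0 => P_nanch.
apply/eqP; apply: trans_eq0 => y z.
rewrite tgtE negbK => y_basin z_W.
rewrite (next_popE tb_sort kappa_gt0 n_gt0 kappa_lt Q_anchored y_basin z_W).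
by apply: contraNneq P_nanch => <-; apply: (anchored_replace tb_sort kappa_gt0 n_gt0 kappa_lt Q_anchored y_basin z_W).
Qed.

Lemma anchored_surv t P : surv t P != 0 -> anchored b kappa P.
Proof.
elim: t P => [|t IH] P /=; first by rewrite pnatr_eq0 eqb0 negbK => /andP[/eqP -> _].
move=> /eqP/psumr_neq0P[Q _|Q /andP[_ /lt0r_neq0]]; first by rewrite mulr_ge0 ?surv_ge0 ?trans_ge0.
by rewrite mulf_eq0 negb_or => /andP[/IH]; apply: anchored_trans.
Qed.

Definition mean_potential t : R := \sum_P surv t P * potential R b P.

Lemma mean_potential_succ t :
  mean_potential t.+1 <= (1 - (2 * mu%:R * n%:R)^-1) * mean_potential t.
Proof.
rewrite /mean_potential /=; under eq_bigr => P _ do rewrite mulr_suml.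
rewrite exchange_big /= mulr_sumr; apply: ler_sum => Q _.
under eq_bigr => P _ do rewrite -mulrA.
rewrite -mulr_sumr mulrCA; have [-> | Q_surv] := eqVneq (surv t Q) 0.
  by rewrite !(mul0r, mulr0).
rewrite ler_wpM2l ?surv_ge0 //.
exact: (drift R geno tb_sort kappa_gt0 n_gt0 kappa_lt tgtE kappa_n2 mu_ge (anchored_surv Q_surv)).
Qed.

Lemma mean_potential_le t :
  mean_potential t <= mu%:R * n%:R * (1 - (2 * mu%:R * n%:R)^-1) ^+ t.
Proof.
elim: t => [|t IH].
  rewrite expr0 mulr1 /mean_potential /= (bigD1 P0) //= eqxx big1 ?addr0 => [|P /negbTE ->]; last first.
    by rewrite mul0r.
  by case: (has tgt P0); rewrite ?mul0r ?mul1r ?mulr_ge0 ?potential_le.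
have mun_ge1 : 1 <= mu%:R * n%:R :> R by rewrite -natrM ler1n muln_gt0 n_gt0; lia.
have delta_le1 : 0 <= 1 - (2 * mu%:R * n%:R)^-1 :> R.
  by rewrite subr_ge0 invf_le1 -?mulrA; lra.
apply: le_trans (mean_potential_succ t) _.
by rewrite exprS mulrCA ler_wpM2l.
Qed.

Lemma tail_prob_le_mean_potential t : tail_prob R geno kappa tb tgt P0 t <= mean_potential t.
Proof.
apply: ler_sum => P _; have [-> | P_surv] := eqVneq (surv t P) 0; first by rewrite mul0r.
rewrite -[leLHS]mulr1 ler_wpM2l ?surv_ge0 //.
by apply: le_trans (potential_ge R (anchored_surv P_surv)); rewrite ler1n; lia.
Qed.

End MultiplicativeDrift.

Lemma drift_time_le (R : realType) (mu n : nat) : (2 <= mu)%N -> (1 <= n <= mu)%N ->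
  (ln (mu%:R * n%:R) + 1) / (2 * mu%:R * n%:R)^-1 + 1 <= 10 * mu%:R * n%:R * ln (mu%:R : R).
Proof.
move=> mu_ge2 /andP[n_ge1 n_le]; rewrite invrK.
have muR : 2 <= mu%:R :> R by rewrite (ler_nat R 2).
have nR : 1 <= n%:R :> R by rewrite ler1n.
have nmuR : n%:R <= mu%:R :> R by rewrite ler_nat.
have ln_half := ln_ge_half muR.
have ln_mn : ln (mu%:R * n%:R) <= 2 * ln (mu%:R : R).
  rewrite [2 * _]mulr_natl -lnXn ?(lt_le_trans _ muR) // ler_ln ?posrE ?mulr_gt0 ?exprn_gt0 //; try lra.
  by rewrite expr2 ler_wpM2l //; lra.
have mn1 : 1 <= mu%:R * n%:R :> R by nra.
set L := ln (mu%:R : R) in ln_half ln_mn *; set L2 := ln _ in ln_mn *.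
rewrite -(mulrA 2) -(mulrA 10); set MN := mu%:R * n%:R in mn1 *.
nra.
Qed.

Theorem expected_time_bound (R : realType) (geno b : bool) (n kappa mu : nat)
    (tb : seq (bits n) -> seq nat) (tgt : pred (bits n)) (P0 : pop mu n) :
  valid_sort tb -> (0 < kappa)%N -> (0 < n)%N -> (kappa < mu)%N ->
  (forall x, tgt x = ~~ basin b x) ->
  (kappa * n ^ 2 <= 4 * mu)%N -> (12 * n <= mu)%N ->
  (kappa <= count (pred1 (anchor n b)) P0)%N ->
  expected_time_le geno kappa tb tgt P0 (10 * mu%:R * n%:R * ln (mu%:R : R)).
Proof.
move=> tb_sort kappa_gt0 n_gt0 kappa_lt tgtE kappa_n2 mu_ge P0_anchors N.
have [P0_found | P0_nfound] := boolP (has tgt P0).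
  rewrite big1 => [|t _]; last by apply: big1 => P _; apply: surv_found.
  by rewrite !mulr_ge0 ?ln_ge0 // ler1n; lia.
have P0_anchored : anchored b kappa P0.
  rewrite /anchored P0_anchors; apply/allP => x x_P0; rewrite -[basin b x]negbK -tgtE.
  by apply: contra P0_nfound => x_tgt; apply/hasP; exists x.
have mn1 : 1 <= mu%:R * n%:R :> R by rewrite -natrM ler1n muln_gt0 n_gt0; lia.
have delta01 : 0 < (2 * mu%:R * n%:R : R)^-1 <= 1.
  by rewrite invr_gt0 invf_le1 -?mulrA; lra.
apply: le_trans (drift_time_le R _ _); last 2 first.
- lia.
- by rewrite n_gt0 (leq_trans _ mu_ge) // leq_pmull.
apply: (sum_tail_mult_drift mn1 delta01) => t; first exact: tail_prob_le1.
apply: le_trans (mean_potential_le R geno tb_sort kappa_gt0 n_gt0 kappa_lt tgtE kappa_n2 mu_ge P0_anchored t).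
exact: tail_prob_le_mean_potential.
Qed.

Unset Implicit Arguments.
Theorem corollary2 (R : realType) :
  exists (c : R) (n0 : nat),
  forall (geno : bool) (n kappa mu : nat) (tb : seq (bits n) -> seq nat)
         (P0 : pop mu n),
    (n0 <= n)%N -> (0 < kappa)%N -> (kappa * n ^ 2 <= 4 * mu)%N ->
    valid_sort tb ->
    ((kappa <= count (pred1 (zeros_str n)) P0)%N ->
       expected_time_le geno kappa tb (@atleast_half n) P0
         (c * mu%:R * n%:R * ln mu%:R)) /\
    ((kappa <= count (pred1 (ones_str n)) P0)%N ->
       expected_time_le geno kappa tb (@atmost_half n) P0
         (c * mu%:R * n%:R * ln mu%:R)).
Proof.
exists 10, 48%N => geno n kappa mu tb P0 n_ge kappa_gt0 kappa_n2 tb_sort.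
have n2_le : (n ^ 2 <= 4 * mu)%N by apply: leq_trans kappa_n2; rewrite leq_pmull.
have mu_ge : (12 * n <= mu)%N by move: n2_le; rewrite expnS expn1; nia.
have kappa_lt : (kappa < mu)%N by move: kappa_n2; nia.
have n_gt0 : (0 < n)%N by lia.
split=> P0_anchors.
  exact: (@expected_time_bound R geno false _ _ _ _ _ _ tb_sort _ _ _ (@atleast_halfE n)).
exact: (@expected_time_bound R geno true _ _ _ _ _ _ tb_sort _ _ _ (@atmost_halfE n)).
Qed.
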